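(* Let $\nu$ be a probability measure on $\mathbb R$ not supported on a single point, and let $\mathcal I\subseteq\mathbb R$ be an open interval such that $Y(\theta)=\int e^{\theta x}\nu(dx)<\infty$ for all $\theta\in\mathcal I$. For $\theta\in\mathcal I$ let $\nu^\theta(dx)=Y(\theta)^{-1}e^{\theta x}\nu(dx)$, let $\varrho(\theta)=\int x\,\nu^\theta(dx)$, which maps $\mathcal I$ continuously and strictly increasingly onto an open interval $\mathcal J$, and let $\theta(\varrho)$ be its inverse. Let $\psi$ be a measurable function on $\mathbb R$ with $\int|\psi|d\nu^\theta<\infty$ for all $\theta\in\mathcal I$, and define $\Psi(\varrho)=\int\psi\,d\nu^{\theta(\varrho)}$ for $\varrho\in\mathcal J$ (an infinitely differentiable function). If $\psi$ is convex on $\mathbb R$, then $\Psi$ is convex on $\mathcal J$. If moreover there is no affine function $g(x)=ax+b$ with $\psi=g$ $\nu$-a.e., then $\Psi''(\varrho)>0$ for all $\varrho\in\mathcal J$, and in particular $\Psi$ is strictly convex on $\mathcal J$. *)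

From HB Require Import structures.
From mathcomp Require Import all_boot all_order all_algebra.
From mathcomp Require Import all_classical all_reals all_analysis.
Set Implicit Arguments. Unset Strict Implicit. Unset Printing Implicit Defensive.
Import Order.TTheory GRing.Theory Num.Theory.
Import numFieldNormedType.Exports.
Local Open Scope classical_set_scope.
Local Open Scope ring_scope.

Section Tilt.
Context (R : realType) (nu : probability R R).

Definition Ymgf (theta : R) : R := fine (\int[nu]_x (expR (theta * x))%:E).

(* \int f d nu^theta, where nu^theta(dx) = Y(theta)^{-1} e^{theta x} nu(dx) *)
Definition tilt_int (theta : R) (f : R -> R) : R :=
  (Ymgf theta)^-1 * fine (\int[nu]_x (f x * expR (theta * x))%:E).

Definition rho (theta : R) : R := tilt_int theta id.

Definition eitv (a b : \bar R) : set R := [set x : R | (a < x%:E < b)%E].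

Definition Jset (I : set R) : set R := rho @` I.

Definition theta_of (I : set R) (r : R) : R := xget 0 [set t | I t /\ rho t = r].

Definition PsiF (I : set R) (psi : R -> R) (r : R) : R :=
  tilt_int (theta_of I r) psi.

End Tilt.

Definition convex_on (R : realType) (D : set R) (f : R -> R) : Prop :=
  forall x y t, D x -> D y -> 0 <= t <= 1 ->
    f (t * x + (1 - t) * y) <= t * f x + (1 - t) * f y.

Definition strictly_convex_on (R : realType) (D : set R) (f : R -> R) : Prop :=
  forall x y t, D x -> D y -> x != y -> 0 < t < 1 ->
    f (t * x + (1 - t) * y) < t * f x + (1 - t) * f y.

From HB Require Import structures.
From mathcomp Require Import all_boot all_order all_algebra.
From mathcomp Require Import all_classical all_reals all_analysis.
From mathcomp Require Import lra ring measurable_realfun.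
Set Implicit Arguments. Unset Strict Implicit. Unset Printing Implicit Defensive.
Import Order.TTheory GRing.Theory Num.Theory.
Import numFieldNormedType.Exports.
Local Open Scope classical_set_scope.
Local Open Scope ring_scope.

(* Write M_n(t) = \int x^n e^(t x) nu(dx) and P_n(t) = \int psi(x) x^n e^(t x) nu(dx).
   Then rho = M_1 / M_0, and differentiating Psi(rho(t)) = P_0(t) / M_0(t) along the
   inverse of rho gives Psi'(rho(t)) = b(t) and
     Psi''(rho(t)) = M_0(t)^3 / G(t)^2 * \int phi_t(x) x^2 e^(t x) nu(dx),
   where G = M_0 M_2 - M_1^2 > 0 (nu is not a Dirac mass) and phi_t = psi - a(t) - b(t) x
   is psi minus its best affine approximation in L^2(nu^t), so that phi_t is orthogonal
   to 1 and x. Since phi_t is convex it changes sign at most twice: some quadratic q with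
   nonnegative leading coefficient satisfies phi_t q >= 0, with q vanishing only at zeros
   of phi_t. Integrating phi_t q and using orthogonality shows that the last integral is
   nonnegative, and zero only if phi_t = 0 nu-a.e., i.e. only if psi is affine nu-a.e.
   (Strict) convexity of Psi then follows from the sign of Psi'' by the mean value
   theorem. *)

Section derivative_sign_on_interval.
Context {R : realType}.
Implicit Types (f : R -> R) (J : set R).

Lemma derivable_within_continuous_cc f x y :
  (forall z, x <= z <= y -> derivable f z 1) -> {within `[x, y], continuous f}.
Proof.
by move=> df; apply: derivable_within_continuous => z; rewrite in_itv /=; exact: df.
Qed.

Variables (J : set R) (f : R -> R).
Hypothesis iJ : is_interval J.
Hypothesis df : forall z, J z -> derivable f z 1.

Let df_cc x y : J x -> J y -> forall z, x <= z <= y -> derivable f z 1.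
Proof. by move=> Jx Jy z /(iJ Jx Jy); exact: df. Qed.

Let df_oo x y : J x -> J y -> forall z, z \in `]x, y[ -> derivable f z 1.
Proof.
by move=> Jx Jy z; rewrite in_itv /= => /andP[xz zy]; apply: (df_cc Jx Jy); rewrite !ltW.
Qed.

Lemma derive1_ge0_le_on : (forall z, J z -> 0 <= derive1 f z) ->
  forall x y, J x -> J y -> x <= y -> f x <= f y.
Proof.
move=> f'0 x y Jx Jy xy; apply: (@ger0_derive1_ndecr _ _ x y) => //.
- exact: df_oo.
- by move=> z; rewrite in_itv /= => /andP[xz zy]; apply/f'0/(iJ Jx Jy); rewrite !ltW.
- exact/derivable_within_continuous_cc/(df_cc Jx Jy).
Qed.

Lemma derive1_gt0_lt_on : (forall z, J z -> 0 < derive1 f z) ->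
  forall x y, J x -> J y -> x < y -> f x < f y.
Proof.
move=> f'0 x y Jx Jy xy; apply: (@gtr0_derive1_incr _ _ x y) => //.
- exact: df_oo.
- by move=> z; rewrite in_itv /= => /andP[xz zy]; apply/f'0/(iJ Jx Jy); rewrite !ltW.
- exact/derivable_within_continuous_cc/(df_cc Jx Jy).
Qed.

End derivative_sign_on_interval.

Section convexity_from_second_derivative.
Context {R : realType}.
Implicit Types (f : R -> R) (J : set R).

Definition convex_gap f x y t := t * f x + (1 - t) * f y - f (t * x + (1 - t) * y).

Lemma convex_gapC f x y t : convex_gap f y x (1 - t) = convex_gap f x y t.
Proof. by rewrite /convex_gap subKr [t * f x + _]addrC [t * x + _]addrC. Qed.

Lemma convex_gap_MVT f x y t :
  (forall z, x <= z <= y -> derivable f z 1) -> x < y -> 0 < t < 1 ->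
  exists c1 c2, [/\ x < c1, c1 < c2, c2 < y &
    convex_gap f x y t = t * (1 - t) * (y - x) * (derive1 f c2 - derive1 f c1)].
Proof.
move=> df xy /andP[t0 t1]; set z := t * x + (1 - t) * y.
have xz : x < z by rewrite /z; nra.
have zy : z < y by rewrite /z; nra.
have mvt u v : x <= u -> u < v -> v <= y ->
    exists2 c, u < c < v & f v - f u = derive1 f c * (v - u).
  move=> xu uv vy.
  have df_uv w : u <= w <= v -> derivable f w 1.
    by move=> /andP[uw wv]; apply: df; rewrite (le_trans xu uw) (le_trans wv vy).
  have der w : w \in `]u, v[ -> is_derive w 1 f (derive1 f w).
    rewrite in_itv /= derive1E => /andP[uw wv]; apply/derivableP/df_uv.
    by rewrite !ltW.
  have [c] := MVT uv der (derivable_within_continuous_cc df_uv).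
  by rewrite in_itv /= => cuv ->; exists c.
have [c1 /andP[xc1 c1z] e1] := mvt x z (lexx x) xz (ltW zy).
have [c2 /andP[zc2 c2y] e2] := mvt z y (ltW xz) zy (lexx y).
exists c1, c2; split => //; first exact: lt_trans c1z zc2.
have -> : convex_gap f x y t = (1 - t) * (f y - f z) - t * (f z - f x).
  by rewrite /convex_gap -/z; ring.
by rewrite e1 e2 /z; ring.
Qed.

Lemma convex_gap_derive1 J f x y t : is_interval J ->
  (forall z, J z -> derivable f z 1) -> J x -> J y -> x < y -> 0 < t < 1 ->
  exists c1 c2, [/\ J c1, J c2, c1 < c2 &
    convex_gap f x y t = t * (1 - t) * (y - x) * (derive1 f c2 - derive1 f c1)].
Proof.
move=> iJ df Jx Jy xy t01.
have Jxy z : x <= z <= y -> J z by exact: iJ.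
have [c1 [c2 [xc1 c12 c2y ->]]] := convex_gap_MVT (fun z xzy => df z (Jxy z xzy)) xy t01.
exists c1, c2; split => //; apply: Jxy.
- by rewrite (ltW xc1) (ltW (lt_trans c12 c2y)).
- by rewrite (ltW c2y) (ltW (lt_trans xc1 c12)).
Qed.

Lemma convex_on_derive2_ge0 J f : is_interval J ->
  (forall z, J z -> derivable f z 1 /\ derivable (derive1 f) z 1 /\
     0 <= derive1 (derive1 f) z) -> convex_on J f.
Proof.
move=> iJ dJ x y t Jx Jy /andP[t0 t1]; rewrite -subr_ge0 -/(convex_gap f x y t).
have [->|tn0] := eqVneq t 0; first by rewrite /convex_gap !mul0r !add0r subr0 !mul1r subrr.
have [->|tn1] := eqVneq t 1; first by rewrite /convex_gap subrr !mul0r !addr0 !mul1r subrr.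
have t01 : 0 < t < 1 by rewrite !lt_neqAle t0 t1 eq_sym tn0 tn1.
have df z : J z -> derivable f z 1 by case/dJ.
have f'_mono :=
  derive1_ge0_le_on iJ (fun z Jz => (dJ z Jz).2.1) (fun z Jz => (dJ z Jz).2.2).
wlog xy : x y t Jx Jy t01 {t0 t1 tn0 tn1} / x <= y.
  move=> gap_ge0; have [|/ltW yx] := leP x y; first exact: gap_ge0.
  by rewrite -convex_gapC; apply: gap_ge0 => //; lra.
move: xy; rewrite le_eqVlt => /predU1P[<-|xy].
  by rewrite /convex_gap -!mulrDl (_ : t + (1 - t) = 1) ?mul1r ?subrr //; ring.
have [c1 [c2 [Jc1 Jc2 c12 ->]]] := convex_gap_derive1 iJ df Jx Jy xy t01.
by case/andP: t01 => t0 t1; rewrite mulr_ge0 ?subr_ge0 ?f'_mono ?ltW // !mulr_gt0 ?subr_gt0.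
Qed.

Lemma strictly_convex_on_derive2_gt0 J f : is_interval J ->
  (forall z, J z -> derivable f z 1 /\ derivable (derive1 f) z 1 /\
     0 < derive1 (derive1 f) z) -> strictly_convex_on J f.
Proof.
move=> iJ dJ x y t Jx Jy xny t01; rewrite -subr_gt0 -/(convex_gap f x y t).
have df z : J z -> derivable f z 1 by case/dJ.
have f'_mono :=
  derive1_gt0_lt_on iJ (fun z Jz => (dJ z Jz).2.1) (fun z Jz => (dJ z Jz).2.2).
wlog xy : x y t Jx Jy xny t01 / x < y.
  move=> gap_gt0; have [xy|yx|exy] := ltgtP x y; first exact: gap_gt0.
  - by rewrite -convex_gapC; apply: gap_gt0; rewrite 1?eq_sym //; lra.
  - by rewrite exy eqxx in xny.
have [c1 [c2 [Jc1 Jc2 c12 ->]]] := convex_gap_derive1 iJ df Jx Jy xy t01.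
by case/andP: t01 => t0 t1; rewrite !mulr_gt0 ?subr_gt0 ?f'_mono.
Qed.

End convexity_from_second_derivative.

Section convex_real_function.
Context {R : realType} (phi : R -> R).
Hypothesis phi_convex : forall x y t, 0 <= t <= 1 ->
  phi (t * x + (1 - t) * y) <= t * phi x + (1 - t) * phi y.

Lemma convex_increment_le (x e d : R) : 0 <= d <= 1 ->
  `|phi (x + d * e) - phi x| <=
    d * (`|phi (x + e) - phi x| + `|phi (x - e) - phi x|).
Proof.
move=> d01; have half01 : 0 <= (2^-1 : R) <= 1 by apply/andP; split; lra.
have := phi_convex (x + e) x d01.
have := phi_convex (x - e) x d01.
have := phi_convex (x + d * e) (x - d * e) half01.
rewrite (_ : 2^-1 * (x + d * e) + (1 - 2^-1) * (x - d * e) = x); last by field.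
rewrite (_ : d * (x - e) + (1 - d) * x = x - d * e); last ring.
rewrite (_ : d * (x + e) + (1 - d) * x = x + d * e); last ring.
have := ler_norm (phi (x + e) - phi x); have := ler_norm (phi (x - e) - phi x).
have := ler_norm (- (phi (x + e) - phi x)); have := ler_norm (- (phi (x - e) - phi x)).
rewrite !normrN.
move=> *; case/andP: d01 => d0 d1; rewrite ler_norml; apply/andP; split; nra.
Qed.

Lemma convex_continuous : continuous phi.
Proof.
move=> x; set A := `|phi (x + 1) - phi x| + `|phi (x - 1) - phi x|.
have lipschitz_at y : `|y - x| <= 1 -> `|phi y - phi x| <= `|y - x| * A.
  move=> yx1; have d01 : 0 <= `|y - x| <= 1 by rewrite normr_ge0.
  have [xy|yx] := leP x y.
  - have yxE : `|y - x| = y - x by rewrite ger0_norm ?subr_ge0.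
    by have := convex_increment_le x 1 d01; rewrite {1}yxE mulr1 subrKC.
  - have yxE : `|y - x| = x - y by rewrite ltr0_norm ?subr_lt0 ?opprB.
    have := convex_increment_le x (-1) d01.
    by rewrite {1}yxE mulrN1 opprB subrKC opprK /A [X in _ * X]addrC.
have A1 : 0 < A + 1 by rewrite ltr_wpDl // addr_ge0.
apply/cvgrPdist_lt => e e0; near=> y.
have yx1 : `|y - x| <= 1.
  by rewrite distrC; near: y; apply: cvgr_dist_le; [exact: cvg_id | lra].
have yxA : `|y - x| * (A + 1) < e.
  rewrite -ltr_pdivlMr //.
  rewrite distrC; near: y; apply: cvgr_dist_lt; first exact: cvg_id.
  exact: divr_gt0.
rewrite distrC (le_lt_trans (lipschitz_at y yx1)) // (le_lt_trans _ yxA) //.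
by rewrite ler_wpM2l // lerDl.
Unshelve. all: end_near.
Qed.

Lemma convex_chord (u v z : R) : 0 <= (z - u) * (v - z) ->
  (v - u) ^+ 2 * phi z <= (v - u) * ((v - z) * phi u + (z - u) * phi v).
Proof.
move=> zuv; have [<-|uv] := eqVneq u v; first by rewrite subrr expr0n /= !mul0r.
have vu2 : 0 < (v - u) ^+ 2 by rewrite exprn_even_gt0 //= subr_eq0 eq_sym.
set l := (v - z) / (v - u).
have lE : l = (v - z) * (v - u) / (v - u) ^+ 2.
  by rewrite /l; field; rewrite subr_eq0 eq_sym.
have l01 : 0 <= l <= 1.
  have := sqr_ge0 (v - z); have := sqr_ge0 (z - u); rewrite !expr2 => ? ?.
  rewrite lE ler_pdivrMr // mul1r expr2; apply/andP; split; last nra.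
  by apply: divr_ge0; nra.
have := phi_convex u v l01; rewrite -(ler_pM2l vu2).
rewrite (_ : l * u + (1 - l) * v = z); last by rewrite /l; field; rewrite subr_eq0 eq_sym.
move/le_trans; apply; rewrite le_eqVlt; apply/orP; left; apply/eqP.
by rewrite lE; field; rewrite subr_eq0 eq_sym.
Qed.

Lemma convex_gt0_beyond_zero (s x z : R) : phi s = 0 -> phi x < 0 ->
  (z - s) * (x - s) < 0 -> 0 < phi z.
Proof.
move=> phis phix zsx.
have := convex_chord (u := z) (v := x) (z := s) (ltac:(nra)); rewrite phis mulr0.
have P0 : 0 < (x - z) * (x - s) by have := sqr_ge0 (x - s); rewrite expr2; nra.
have Q0 : 0 < (x - z) * (s - z) by have := sqr_ge0 (s - z); rewrite expr2; nra.
rewrite mulrDr !mulrA; have : (x - z) * (s - z) * phi x < 0 by rewrite pmulr_rlt0.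
by move=> ? ?; rewrite -(pmulr_rgt0 _ P0); lra.
Qed.

Lemma convex_le0_between_zero (s x z : R) : phi s = 0 -> phi x < 0 ->
  0 <= (z - s) * (x - z) -> phi z <= 0.
Proof.
move=> phis phix szx; have := convex_chord szx; rewrite phis mulr0 add0r.
have xs : x != s by apply: contraTneq phix => ->; rewrite phis ltxx.
have xs2 : 0 < (x - s) ^+ 2 by rewrite exprn_even_gt0 //= subr_eq0.
have P0 : 0 <= (x - s) * (z - s) by have := sqr_ge0 (z - s); rewrite expr2; nra.
rewrite mulrA -(pmulr_rle0 _ xs2) => /le_trans; apply.
by rewrite mulr_ge0_le0 // ltW.
Qed.

Lemma convex_zero_between (a b : R) : a <= b -> phi a * phi b <= 0 ->
  exists2 c, a <= c <= b & phi c = 0.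
Proof.
move=> ab phiab.
have : Num.min (phi a) (phi b) <= 0 <= Num.max (phi a) (phi b).
  rewrite ge_min le_max; have [pa|pa] := leP 0 (phi a).
  - by rewrite andbT; case: (leP (phi a) 0) => //= ?; nra.
  - by rewrite (ltW pa) /=; nra.
have cont := continuous_subspaceT (A := `[a, b]) convex_continuous.
by case/(IVT ab cont) => c; rewrite in_itv /=; exists c.
Qed.

Lemma convex_sign_between_zeros (s x t : R) : phi s = 0 -> phi t = 0 -> phi x < 0 ->
  s < x -> x < t -> forall y, 0 <= phi y * ((y - s) * (y - t)).
Proof.
move=> phis phit phix sx xt y; have [ys|sy] := ltP y s.
  have := convex_gt0_beyond_zero phis phix (ltac:(nra) : (y - s) * (x - s) < 0).
  by move=> ?; rewrite mulr_ge0 ?ltW //; nra.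
have [yt|ty] := leP y t.
  have : phi y <= 0.
    have [yx|xy] := leP y x.
    - by apply: (convex_le0_between_zero phis phix); nra.
    - by apply: (convex_le0_between_zero phit phix); nra.
  by move=> ?; rewrite mulr_le0 // mulr_ge0_le0 ?subr_ge0 ?subr_le0.
have := convex_gt0_beyond_zero phit phix (ltac:(nra) : (y - t) * (x - t) < 0).
by move=> ?; rewrite mulr_ge0 ?ltW //; nra.
Qed.

Lemma convex_sign_zero_right (x t : R) : phi t = 0 -> phi x < 0 -> x < t ->
  (forall y, y <= x -> phi y < 0) -> forall y, 0 <= phi y * (y - t).
Proof.
move=> phit phix xt neg_left y; have [ty|yt] := ltP t y.
  have := convex_gt0_beyond_zero phit phix (ltac:(nra) : (y - t) * (x - t) < 0).
  by move=> ?; rewrite mulr_ge0 ?ltW ?subr_gt0.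
have : phi y <= 0.
  have [xy|yx] := leP x y; last exact/ltW/neg_left/ltW.
  by apply: (convex_le0_between_zero phit phix); nra.
by move=> ?; rewrite mulr_le0 ?subr_le0.
Qed.

Lemma convex_sign_zero_left (s x : R) : phi s = 0 -> phi x < 0 -> s < x ->
  (forall y, x <= y -> phi y < 0) -> forall y, 0 <= phi y * (s - y).
Proof.
move=> phis phix sx neg_right y; have [ys|sy] := ltP y s.
  have := convex_gt0_beyond_zero phis phix (ltac:(nra) : (y - s) * (x - s) < 0).
  by move=> ?; rewrite mulr_ge0 ?ltW ?subr_gt0.
have : phi y <= 0.
  have [yx|xy] := leP y x; last exact/ltW/neg_right/ltW.
  by apply: (convex_le0_between_zero phis phix); nra.
by move=> ?; rewrite mulr_le0 ?subr_le0.
Qed.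

(* The quadratic is 1 if phi >= 0; otherwise, for a point x with phi x < 0, it is
   (y - s) (y - t), y - t, s - y or -1 according to which of the zeros s < x < t of
   phi exist. *)
Lemma convex_sign_quadratic : exists q2 q1 q0 : R, 0 <= q2 /\ forall y,
  0 <= phi y * (q2 * y ^+ 2 + q1 * y + q0) /\
  (q2 * y ^+ 2 + q1 * y + q0 = 0 -> phi y = 0).
Proof.
have [[x phix]|phi_ge0] := pselect (exists x, phi x < 0); last first.
  exists 0, 0, 1; split => // y; rewrite !mul0r !add0r mulr1; split.
  - by rewrite leNgt; apply/negP => phiy; apply: phi_ge0; exists y.
  - by move/eqP; rewrite oner_eq0.
have zero_off_x c : phi c = 0 -> c != x.
  by move=> phic; apply: contraTneq phix => <-; rewrite phic ltxx.
have neg_right : ~ (exists t, x < t /\ phi t = 0) -> forall y, x <= y -> phi y < 0.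
  move=> nz y xy; rewrite ltNge; apply/negP => phiy; apply: nz.
  have [c /andP[xc _] phic] := convex_zero_between xy (ltac:(nra)).
  by exists c; rewrite lt_neqAle eq_sym zero_off_x.
have neg_left : ~ (exists s, s < x /\ phi s = 0) -> forall y, y <= x -> phi y < 0.
  move=> nz y yx; rewrite ltNge; apply/negP => phiy; apply: nz.
  have [c /andP[_ cx] phic] := convex_zero_between yx (ltac:(nra)).
  by exists c; rewrite lt_neqAle zero_off_x.
have [[t [xt phit]]|nR] := pselect (exists t, x < t /\ phi t = 0);
have [[s [sx phis]]|nL] := pselect (exists s, s < x /\ phi s = 0).
- exists 1, (- (s + t)), (s * t); split => // y.
  have -> : 1 * y ^+ 2 + - (s + t) * y + s * t = (y - s) * (y - t) by ring.
  split; first exact: convex_sign_between_zeros phis phit phix sx xt y.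
  by move/eqP; rewrite mulf_eq0 !subr_eq0 => /orP[] /eqP ->.
- exists 0, 1, (- t); split => // y; rewrite mul0r add0r mul1r.
  split; first exact: convex_sign_zero_right phit phix xt (neg_left nL) y.
  by move/eqP; rewrite subr_eq0 => /eqP ->.
- exists 0, (-1), s; split => // y; rewrite mul0r add0r mulN1r addrC.
  split; first exact: convex_sign_zero_left phis phix sx (neg_right nR) y.
  by move/eqP; rewrite subr_eq0 => /eqP <-.
- exists 0, 0, (-1); split => // y; rewrite !mul0r !add0r mulrN1.
  split; last by move/eqP; rewrite oppr_eq0 oner_eq0.
  by rewrite oppr_ge0; have [/(neg_left nL)|/ltW/(neg_right nR)] := leP y x => /ltW.
Qed.

End convex_real_function.

Lemma measurable_expR_mul {R : realType} (t : R) :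
  measurable_fun setT (fun y : R => expR (t * y)).
Proof.
apply: continuous_measurable_fun => y; apply: continuous_comp; last exact: continuous_expR.
by apply: continuousM; [exact: cvg_cst | exact: cvg_id].
Qed.

Lemma is_derive_expR_mul {R : realType} (y x : R) :
  is_derive x 1 (fun s : R => expR (s * y)) (y * expR (x * y)).
Proof.
have dmul : is_derive x 1 (fun s : R => s * y) y.
  have := is_deriveM (is_derive_id x 1) (is_derive_cst y x 1).
  by rewrite scaler0 add0r scaler1.
by rewrite [y * _]mulrC; apply: is_derive1_comp.
Qed.

Lemma norm_mul_expR_le {R : realType} (x u v d y : R) : u <= x <= v -> 0 < d ->
  `|y| * expR (x * y) <= (expR ((u - d) * y) + expR ((v + d) * y)) / d.
Proof.
move=> /andP[ux xv] d0; rewrite ler_pdivlMr //.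
have := expR_gt0 (x * y); have := expR_gt0 ((u - d) * y); have := expR_gt0 ((v + d) * y).
have [y0|y0] := leP 0 y.
- have dy : d * y <= expR (d * y) by have := expR_ge1Dx (d * y); lra.
  have xv_exp : expR (x * y) <= expR (v * y) by rewrite ler_expR ler_wpM2r.
  have : expR ((v + d) * y) = expR (v * y) * expR (d * y) by rewrite -expRD mulrDl.
  have := mulr_ge0 (ltW d0) y0; rewrite ger0_norm //; nra.
- have dy : - (d * y) <= expR (- (d * y)) by have := expR_ge1Dx (- (d * y)); lra.
  have xu_exp : expR (x * y) <= expR (u * y) by rewrite ler_expR ler_wnM2r // ltW.
  have : expR ((u - d) * y) = expR (u * y) * expR (- (d * y)) by rewrite -expRD mulrBl.
  have : 0 <= - (d * y) by rewrite oppr_ge0 pmulr_rle0 // ltW.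
  rewrite ltr0_norm //; nra.
Qed.

Lemma ball_endpoints {R : realType} (P : set R) (t d : R) :
  (forall s, `|s - t| <= d -> P s) -> 0 <= d -> P (t - d) /\ P (t + d).
Proof. by move=> Pd d0; split; apply: Pd; rewrite addrAC subrr add0r ?normrN ger0_norm. Qed.

Section laplace_transform.
Context {R : realType} (nu : probability R R).
Local Notation integrable f := (nu.-integrable setT (EFin \o f)).

Definition laplace (t : R) (g : R -> R) : R :=
  \int[nu]_(y in setT) (g y * expR (t * y)).

Variable I : set R.
Hypothesis I_open : forall t, I t -> exists2 d, 0 < d & forall s, `|s - t| <= d -> I s.

Definition laplace_integrable (g : R -> R) := measurable_fun setT g /\
  forall t, I t -> integrable (fun y => g y * expR (t * y)).

Lemma laplace_integrable_ext (f g : R -> R) :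
  f =1 g -> laplace_integrable f -> laplace_integrable g.
Proof. by move=> /funext <-. Qed.

Lemma laplace_integrableD (f g : R -> R) : laplace_integrable f -> laplace_integrable g ->
  laplace_integrable (fun y => f y + g y).
Proof.
move=> [mf fi] [mg gi]; split; first exact: measurable_funD.
move=> t It; have := integrableD measurableT (fi t It) (gi t It).
by apply: eq_integrable => // y _ /=; rewrite mulrDl EFinD.
Qed.

Lemma laplace_integrableZ (c : R) (g : R -> R) : laplace_integrable g ->
  laplace_integrable (fun y => c * g y).
Proof.
move=> [mg gi]; split; first exact: measurable_funM.
move=> t It; have := integrableZl measurableT c (gi t It).
by apply: eq_integrable => // y _ /=; rewrite -EFinM mulrA.
Qed.



Let laplace_dominating (g : R -> R) (t d e : R) :
  laplace_integrable g -> I (t - d) -> I (t + d) ->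
  integrable (fun y => e * (`|g y * expR ((t - d) * y)| + `|g y * expR ((t + d) * y)|)).
Proof.
move=> [_ gi] Ilo Ihi; have := integrableZl measurableT e
  (integrableD measurableT (integrable_norm (gi _ Ilo)) (integrable_norm (gi _ Ihi))).
by apply: eq_integrable => // y _ /=; rewrite -EFinD -EFinM.
Qed.

Lemma laplace_integrableMx (g : R -> R) : laplace_integrable g ->
  laplace_integrable (fun y => g y * y).
Proof.
move=> [mg gi]; split; first exact: measurable_funM.
move=> t It; have [d d0 Id] := I_open It; have [Ilo Ihi] := ball_endpoints Id (ltW d0).
apply: (le_integrable measurableT _ _ (laplace_dominating d^-1 (conj mg gi) Ilo Ihi)).
  apply/measurable_EFinP/measurable_funM; first exact: measurable_funM.
  exact: measurable_expR_mul.
move=> y _ /=; rewrite lee_fin -mulrA [X in _ <= X]ger0_norm; last first.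
  by apply: mulr_ge0; [rewrite invr_ge0 ltW | exact: addr_ge0].
rewrite !normrM !(ger0_norm (expR_ge0 _)) -mulrDr [X in _ <= X]mulrCA ler_wpM2l //.
rewrite [X in _ <= X]mulrC.
by apply: norm_mul_expR_le; rewrite ?lexx.
Qed.

Lemma is_derive_laplace (g : R -> R) (t : R) : laplace_integrable g -> I t ->
  is_derive t 1 (laplace^~ g) (laplace t (fun y => g y * y)).
Proof.
move=> gI It; have [d d0 Id] := I_open It; have [Ilo Ihi] := ball_endpoints Id (ltW d0).
have d20 : 0 < d / 2 by rewrite divr_gt0.
pose f (x y : R) := g y * expR (x * y).
pose G (y : R) := (d / 2)^-1 * (`|g y * expR ((t - d) * y)| + `|g y * expR ((t + d) * y)|).
have It_ball : `]t - d / 2, t + d / 2[%classic t by rewrite /= in_itv /=; lra.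
have ball_I (x : R) : `]t - d / 2, t + d / 2[%classic x -> I x.
  by rewrite /= in_itv /= => xt; apply: Id; rewrite ler_norml; lra.
have df (x y : R) : is_derive x 1 (f^~ y) (g y * (y * expR (x * y))).
  exact: is_deriveZ (is_derive_expR_mul y x).
have intf (x : R) : `]t - d / 2, t + d / 2[%classic x -> integrable (f x).
  by move/ball_I; exact: gI.2.
have derf (x y : R) : `]t - d / 2, t + d / 2[%classic x -> setT y -> derivable (f^~ y) x 1.
  by move=> _ _; case: (df x y).
have d1f (x y : R) : partial1of2 f x y = g y * (y * expR (x * y)).
  by rewrite partial1of2E; case: (df x y).
have G0 (y : R) : 0 <= G y by apply: mulr_ge0; [rewrite invr_ge0 ltW | exact: addr_ge0].
have Gub (x y : R) : `]t - d / 2, t + d / 2[%classic x -> setT y ->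
    `|partial1of2 f x y| <= G y.
  rewrite /= in_itv /= => /andP[xlo xhi] _; rewrite d1f /G !normrM.
  rewrite !(ger0_norm (expR_ge0 _)) -mulrDr [X in _ <= X]mulrCA ler_wpM2l //.
  rewrite [X in _ <= X]mulrC.
  have -> : t - d = t - d / 2 - d / 2 by field.
  have -> : t + d = t + d / 2 + d / 2 by field.
  by apply: norm_mul_expR_le; rewrite // !ltW.
have intG := laplace_dominating (d / 2)^-1 gI Ilo Ihi.
have := derivable_under_integral measurableT It_ball intf derf G0 intG Gub.
move/derivableP/is_derive_eq; apply.
rewrite -derive1E.
rewrite (differentiation_under_integral measurableT It_ball intf derf G0 intG Gub).
by apply: eq_Rintegral => y _; rewrite d1f mulrA.
Qed.

Lemma laplaceD (t : R) (f g : R -> R) :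
  I t -> laplace_integrable f -> laplace_integrable g ->
  laplace t (fun y => f y + g y) = laplace t f + laplace t g.
Proof.
move=> It [_ fi] [_ gi]; rewrite /laplace -RintegralD //; [|exact: fi|exact: gi].
by apply: eq_Rintegral => y _; rewrite mulrDl.
Qed.

Lemma laplaceZ (t c : R) (g : R -> R) : I t -> laplace_integrable g ->
  laplace t (fun y => c * g y) = c * laplace t g.
Proof.
move=> It [_ gi]; rewrite /laplace -RintegralZl //; last exact: gi.
by apply: eq_Rintegral => y _; rewrite mulrA.
Qed.

Lemma laplace_ge0 (t : R) (g : R -> R) : (forall y, 0 <= g y) -> 0 <= laplace t g.
Proof. by move=> g0; apply: Rintegral_ge0 => y _; rewrite mulr_ge0 ?expR_ge0. Qed.

Lemma laplace_eq0_ae (t : R) (g : R -> R) :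
  I t -> laplace_integrable g -> (forall y, 0 <= g y) ->
  laplace t g = 0 -> {ae nu, forall y, g y = 0}.
Proof.
move=> It [mg gi] g0 Lg0; pose h y := g y * expR (t * y).
have h0 y : 0 <= h y by rewrite mulr_ge0 ?expR_ge0.
have mh : measurable_fun setT (EFin \o h).
  by apply/measurable_EFinP/measurable_funM => //; exact: measurable_expR_mul.
have int_h : (\int[nu]_y (EFin \o h) y = 0)%E.
  rewrite -[LHS]fineK ?(integrable_fin_num _ (gi t It)) //.
  by move: Lg0; rewrite /laplace /Rintegral => ->.
have int_h0 : (\int[nu]_y `|(EFin \o h) y| = 0)%E.
  by rewrite -int_h; apply: eq_integral => y _; rewrite gee0_abs // lee_fin.
have := (ae_eq_integral_abs nu measurableT mh).1 int_h0.
apply: filterS => y /(_ Logic.I) [/eqP].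
by rewrite mulf_eq0 expR_eq0 orbF => /eqP.
Qed.

Lemma laplace_ae0 (t : R) (g : R -> R) :
  measurable_fun setT g -> {ae nu, forall y, g y = 0} ->
  laplace t g = 0.
Proof.
move=> mg g0; rewrite /laplace /Rintegral (ae_eq_integral (cst 0%E)) //.
- by rewrite integral0.
- by apply/measurable_EFinP/measurable_funM => //; exact: measurable_expR_mul.
- by apply: filterS g0 => y /= -> _; rewrite mul0r.
Qed.

End laplace_transform.

Section probability_ae.
Context {R : realType} (nu : probability R R).

Lemma probability_ae_False : ~ {ae nu, forall y : R, False}.
Proof.
have /ae_properfilter_algebraOfSetsType nuP : (0 < nu setT)%E by rewrite probability_setT.
by move=> /(@filter_ex _ _ nuP) [].
Qed.

Lemma probability_ae_eq_set1 (c : R) : {ae nu, forall y, y = c} -> nu [set c] = 1%E.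
Proof.
move=> /(negligibleP _ (measurableC (measurable_set1 c))).
change (nu (~` [set c]) = 0%E -> nu [set c] = 1%E).
have fin : nu [set c] \is a fin_num.
  by rewrite ge0_fin_numE // (le_lt_trans (probability_le1 _ (measurable_set1 c))) ?ltey.
rewrite probability_setC ?measurable_set1 // -(fineK fin) -EFinB => -[/eqP].
by rewrite subr_eq0 => /eqP <-.
Qed.
End probability_ae.

Section moments.
Context {R : realType} (nu : probability R R) (I : set R).
Hypothesis I_open : forall t, I t -> exists2 d, 0 < d & forall s, `|s - t| <= d -> I s.
Local Notation laplace := (laplace nu).
Local Notation laplace_integrable := (laplace_integrable nu I).

Definition moment (g : R -> R) (n : nat) (t : R) : R := laplace t (fun y => g y * y ^+ n).

Lemma laplace_integrableMXn (g : R -> R) n : laplace_integrable g ->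
  laplace_integrable (fun y => g y * y ^+ n).
Proof.
move=> gI; elim: n => [|n IHn].
  by apply: laplace_integrable_ext gI => y; rewrite expr0 mulr1.
apply: laplace_integrable_ext (laplace_integrableMx I_open IHn) => y.
by rewrite exprSr mulrA.
Qed.

Lemma is_derive_moment (g : R -> R) n t : laplace_integrable g -> I t ->
  is_derive t 1 (moment g n) (moment g n.+1 t).
Proof.
move=> gI It; have := is_derive_laplace I_open (laplace_integrableMXn n gI) It.
move/is_derive_eq; apply; rewrite /moment; congr laplace.
by apply/funext => y; rewrite exprSr mulrA.
Qed.

Lemma moment_quadratic (g : R -> R) t q2 q1 q0 : I t -> laplace_integrable g ->
  laplace t (fun y => g y * (q2 * y ^+ 2 + q1 * y + q0)) =
  q2 * moment g 2 t + q1 * moment g 1 t + q0 * moment g 0 t.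
Proof.
move=> It gI; have gIn n := laplace_integrableMXn n gI.
have -> : (fun y => g y * (q2 * y ^+ 2 + q1 * y + q0)) = fun y =>
    (q2 * (g y * y ^+ 2) + q1 * (g y * y ^+ 1)) + q0 * (g y * y ^+ 0).
  by apply/funext => y; rewrite expr1 expr0; ring.
have gZ c n : laplace_integrable (fun y => c * (g y * y ^+ n)).
  exact/laplace_integrableZ/gIn.
rewrite (laplaceD It (laplace_integrableD (gZ q2 2%N) (gZ q1 1%N)) (gZ q0 0%N)).
by rewrite (laplaceD It (gZ q2 2%N) (gZ q1 1%N)) !(laplaceZ _ It).
Qed.

Lemma laplace_integrable_quadratic (g : R -> R) q2 q1 q0 : laplace_integrable g ->
  laplace_integrable (fun y => g y * (q2 * y ^+ 2 + q1 * y + q0)).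
Proof.
move=> gI; have gZ c n := laplace_integrableZ c (laplace_integrableMXn n gI).
apply: laplace_integrable_ext (laplace_integrableD (laplace_integrableD (gZ q2 2%N)
  (gZ q1 1%N)) (gZ q0 0%N)) => y.
by rewrite expr1 expr0; ring.
Qed.

Lemma moment2_convex_ge0 (phi : R -> R) t : I t -> laplace_integrable phi ->
  (forall x y s, 0 <= s <= 1 ->
     phi (s * x + (1 - s) * y) <= s * phi x + (1 - s) * phi y) ->
  moment phi 0 t = 0 -> moment phi 1 t = 0 ->
  0 <= moment phi 2 t /\ (moment phi 2 t = 0 -> {ae nu, forall y, phi y = 0}).
Proof.
move=> It phiI phi_cvx M0 M1.
have [q2 [q1 [q0 [q2_ge0 phiq]]]] := convex_sign_quadratic phi_cvx.
have LF : laplace t (fun y => phi y * (q2 * y ^+ 2 + q1 * y + q0)) = q2 * moment phi 2 t.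
  by rewrite moment_quadratic // M0 M1 !mulr0 !addr0.
have LF_ge0 := laplace_ge0 nu t (fun y => (phiq y).1).
have LF0_ae : q2 * moment phi 2 t = 0 -> {ae nu, forall y, phi y = 0}.
  rewrite -LF => /(laplace_eq0_ae It (laplace_integrable_quadratic q2 q1 q0 phiI)).
  move=> /(_ (fun y => (phiq y).1)); apply: filterS => y /eqP.
  by rewrite mulf_eq0 => /orP[/eqP //|/eqP /(phiq y).2].
split; last by move=> M2; apply: LF0_ae; rewrite M2 mulr0.
have [q20|q2_neq0] := eqVneq q2 0.
  have /LF0_ae phi0 : q2 * moment phi 2 t = 0 by rewrite q20 mul0r.
  rewrite /moment (laplace_ae0 t (laplace_integrableMXn 2 phiI).1) //.
  by apply: filterS phi0 => y ->; rewrite mul0r.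
have q2_gt0 : 0 < q2 by rewrite lt_def q2_neq0 q2_ge0.
by rewrite -(pmulr_rge0 _ q2_gt0) -LF.
Qed.

Lemma moment0_gt0 t : I t -> laplace_integrable (fun _ => 1) ->
  0 < moment (fun _ => 1) 0 t.
Proof.
move=> It oneI; have one_ge0 (y : R) : 0 <= 1 * y ^+ 0 by rewrite mul1r expr0.
rewrite lt_def laplace_ge0 // andbT; apply/eqP => M0.
apply: probability_ae_False.
apply: filterS (laplace_eq0_ae It (laplace_integrableMXn 0 oneI) one_ge0 M0) => y.
by rewrite mul1r expr0 => /eqP; rewrite oner_eq0.
Qed.

Lemma moment_variance_gt0 t : I t -> laplace_integrable (fun _ => 1) ->
  (forall c : R, nu [set c] != 1%E) ->
  0 < moment (fun _ => 1) 0 t * moment (fun _ => 1) 2 t - moment (fun _ => 1) 1 t ^+ 2.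
Proof.
move=> It oneI nondeg; have M0_gt0 := moment0_gt0 It oneI.
set M0 := moment _ 0 t; set M1 := moment _ 1 t; set M2 := moment _ 2 t; set c := M1 / M0.
have := moment_quadratic 1 (- (2 * c)) (c ^+ 2) It oneI.
have sq y : 1 * (1 * y ^+ 2 + - (2 * c) * y + c ^+ 2) = (y - c) ^+ 2 by ring.
have sq_ge0 y : 0 <= 1 * (1 * y ^+ 2 + - (2 * c) * y + c ^+ 2) by rewrite sq sqr_ge0.
set Q := laplace t _ => QE.
have Q_gt0 : 0 < Q.
  rewrite lt_def laplace_ge0 // andbT; apply/eqP => Q0; apply/negP: (nondeg c).
  rewrite negbK probability_ae_eq_set1 //.
  have := laplace_eq0_ae It (laplace_integrable_quadratic _ _ _ oneI) sq_ge0 Q0.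
  apply: filterS => y.
  by rewrite sq => /eqP; rewrite sqrf_eq0 subr_eq0 => /eqP.
have -> : M0 * M2 - M1 ^+ 2 = M0 * Q by rewrite QE /c /M0 /M1 /M2; field; rewrite gt_eqF.
exact: mulr_gt0.
Qed.

End moments.

Section pointwise_derivatives.
Context {R : realType}.
Implicit Types (f g : R -> R) (t a b : R).

Lemma is_derive_mulf f g t a b : is_derive t 1 f a -> is_derive t 1 g b ->
  is_derive t 1 (fun s => f s * g s) (f t * b + g t * a).
Proof. by move=> fa gb; have := is_deriveM fa gb. Qed.

Lemma is_derive_subf f g t a b : is_derive t 1 f a -> is_derive t 1 g b ->
  is_derive t 1 (fun s => f s - g s) (a - b).
Proof. by move=> fa gb; have := is_deriveB fa gb. Qed.

Lemma is_derive_invf f t a : f t != 0 -> is_derive t 1 f a ->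
  is_derive t 1 (fun s => (f s)^-1) (- a / f t ^+ 2).
Proof.
move=> ft0 fa; apply: is_derive_eq (is_deriveV ft0 fa) _.
by change (- f t ^- 2 * a = - a / f t ^+ 2); rewrite !mulNr mulrC.
Qed.

End pointwise_derivatives.

Section exponential_tilting.
Context {R : realType} (nu : probability R R) (I : set R).
Hypothesis I_open : forall t, I t -> exists2 d, 0 < d & forall s, `|s - t| <= d -> I s.
Hypothesis I_itv : is_interval I.
Hypothesis oneI : laplace_integrable nu I (fun _ => 1).
Hypothesis nondeg : forall c : R, nu [set c] != 1%E.

Local Notation M := (moment nu (fun _ => 1)).

(* M 0 t ^+ 2 times the variance of nu^t: the Gram determinant of 1 and x *)
Definition gram t := M 0 t * M 2 t - M 1 t ^+ 2.

Lemma M0_gt0 t : I t -> 0 < M 0 t.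
Proof. by move=> It; exact: (moment0_gt0 I_open It oneI). Qed.

Lemma gram_gt0 t : I t -> 0 < gram t.
Proof. by move=> It; exact: (moment_variance_gt0 I_open It oneI nondeg). Qed.

Lemma is_derive_M n t : I t -> is_derive t 1 (M n) (M n.+1 t).
Proof. by move=> It; exact: (is_derive_moment I_open n oneI It). Qed.

Lemma tilt_intE t f : tilt_int nu t f = (M 0 t)^-1 * laplace nu t f.
Proof.
rewrite /tilt_int /Ymgf; congr (_^-1 * _); rewrite /moment /laplace /Rintegral.
by congr fine; apply: eq_integral => y _; rewrite expr0 !mul1r.
Qed.

Lemma rhoE t : rho nu t = (M 0 t)^-1 * M 1 t.
Proof.
rewrite /rho tilt_intE /moment; congr (_ * laplace _ _ _).
by apply/funext => y; rewrite mul1r expr1.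
Qed.

Lemma is_derive_rho t : I t -> is_derive t 1 (rho nu) (gram t / M 0 t ^+ 2).
Proof.
move=> It; have M0t := M0_gt0 It.
have -> : rho nu = fun s => (M 0 s)^-1 * M 1 s by apply/funext => s; exact: rhoE.
have := is_derive_mulf (is_derive_invf (lt0r_neq0 M0t) (is_derive_M 0 It))
  (is_derive_M 1 It).
by move/is_derive_eq; apply; rewrite /gram; field; rewrite gt_eqF.
Qed.

Lemma derivable_rho t : I t -> derivable (rho nu) t 1.
Proof. by case/is_derive_rho. Qed.

Lemma rho_lt s1 s2 : I s1 -> I s2 -> s1 < s2 -> rho nu s1 < rho nu s2.
Proof.
move=> Is1 Is2; apply: (derive1_gt0_lt_on I_itv) => // [t It|t It].
  exact: derivable_rho.
rewrite derive1E; case: (is_derive_rho It) => _ ->.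
by rewrite divr_gt0 ?exprn_gt0 ?gram_gt0 ?M0_gt0.
Qed.

Lemma theta_of_rho t : I t -> theta_of nu I (rho nu t) = t.
Proof.
move=> It; have [] : [set s | I s /\ rho nu s = rho nu t] (theta_of nu I (rho nu t)).
  exact: (@xgetI _ 0 _ t (conj It erefl)).
set s := theta_of _ _ _ => Is rho_st.
by have [/(rho_lt Is It)|/(rho_lt It Is)|//] := ltgtP s t; rewrite rho_st ltxx.
Qed.

Lemma Jset_theta_of r : Jset nu I r -> I (theta_of nu I r) /\ rho nu (theta_of nu I r) = r.
Proof. by move=> [t It <-]; rewrite theta_of_rho. Qed.

Lemma is_interval_Jset : is_interval (Jset nu I).
Proof.
move=> _ _ [s1 Is1 <-] [s2 Is2 <-] r /andP[r1 r2].
have [s12|s21] := leP s1 s2; last first.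
  by have := rho_lt Is2 Is1 s21; rewrite ltNge (le_trans r1 r2).
have I_s12 (z : R) : s1 <= z <= s2 -> I z by exact: I_itv.
have rho_cont := derivable_within_continuous_cc (fun z zs => derivable_rho (I_s12 z zs)).
have r_between : Num.min (rho nu s1) (rho nu s2) <= r <= Num.max (rho nu s1) (rho nu s2).
  by rewrite ge_min le_max r1 r2 orbT.
have [s] := IVT s12 rho_cont r_between.
by rewrite in_itv /= => /I_s12 Is <-; exists s.
Qed.

Lemma Jset_nbhs r : Jset nu I r -> \forall r' \near r, Jset nu I r'.
Proof.
move=> /Jset_theta_of[It rho_t]; set t := theta_of nu I r in It rho_t.
have [d d0 Id] := I_open It.
have [Ilo Ihi] := ball_endpoints Id (ltW d0).
have r_in : r \in `]rho nu (t - d), rho nu (t + d)[.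
  by rewrite in_itv /= -rho_t !rho_lt // ?ltrDl ?gtrDl ?oppr_lt0.
apply: filterS (near_in_itvoo r_in) => r'; rewrite in_itv /= => /andP[lo hi].
apply: (is_interval_Jset (x := rho nu (t - d)) (y := rho nu (t + d))).
- by exists (t - d).
- by exists (t + d).
- by rewrite !ltW.
Qed.

Lemma is_derive_theta_of t : I t ->
  is_derive (rho nu t) 1 (theta_of nu I) (M 0 t ^+ 2 / gram t).
Proof.
move=> It; have I_near : \forall s \near t, I s.
  have [d d0 Id] := I_open It; apply/nbhs_ballP; exists d => //= s.
  by rewrite /ball /= => ts; apply: Id; rewrite distrC ltW.
have rho_theta : {near t, cancel (rho nu) (theta_of nu I)}.
  by apply: filterS I_near => s; exact: theta_of_rho.
have rho_cont : {near t, continuous (rho nu)}.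
  apply: filterS I_near => s Is.
  exact/differentiable_continuous/derivable1_diffP/derivable_rho.
have gram_M0 : gram t / M 0 t ^+ 2 != 0.
  by rewrite mulf_neq0 ?invr_eq0 ?gt_eqF ?exprn_gt0 ?gram_gt0 ?M0_gt0.
have := is_derive_inverse rho_theta rho_cont (is_derive_rho It) gram_M0.
by rewrite invf_div.
Qed.

Variable psi : R -> R.
Hypothesis psiI : laplace_integrable nu I psi.
Local Notation P := (moment nu psi).

(* intercept t + slope t * x is the orthogonal projection of psi onto the affine
   functions in L^2(nu^t). *)
Definition slope t := (M 0 t * P 1 t - M 1 t * P 0 t) / gram t.
Definition intercept t := (M 2 t * P 0 t - M 1 t * P 1 t) / gram t.
Definition residual t y := psi y - intercept t - slope t * y.

Lemma moment_residual n t : I t ->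
  moment nu (residual t) n t = P n t - intercept t * M n t - slope t * M n.+1 t.
Proof.
move=> It; have In (g : R -> R) k : laplace_integrable nu I g ->
    laplace_integrable nu I (fun y => g y * y ^+ k) by exact: laplace_integrableMXn.
rewrite {1}/moment; have -> : (fun y => residual t y * y ^+ n) = fun y =>
    psi y * y ^+ n + (- intercept t * (1 * y ^+ n) + - slope t * (1 * y ^+ n.+1)).
  by apply/funext => y; rewrite /residual exprSr; ring.
have oneZ c k := laplace_integrableZ c (In _ k oneI).
rewrite (laplaceD It (In _ n psiI) (laplace_integrableD (oneZ _ n) (oneZ _ n.+1))).
rewrite (laplaceD It (oneZ _ n) (oneZ _ n.+1)).
by rewrite (laplaceZ _ It (In _ n oneI)) (laplaceZ _ It (In _ n.+1 oneI)) /moment; ring.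
Qed.

Lemma moment_residual_orth t : I t ->
  moment nu (residual t) 0 t = 0 /\ moment nu (residual t) 1 t = 0.
Proof.
move=> It; have := gram_gt0 It; rewrite !moment_residual // /intercept /slope /gram.
by split; field; rewrite gt_eqF.
Qed.

Lemma is_derive_tilt_psi t : I t -> is_derive t 1 (fun s => tilt_int nu s psi)
  ((M 0 t * P 1 t - M 1 t * P 0 t) / M 0 t ^+ 2).
Proof.
move=> It; have M0t := M0_gt0 It.
have -> : (fun s => tilt_int nu s psi) = fun s => (M 0 s)^-1 * P 0 s.
  apply/funext => s; rewrite tilt_intE /moment; congr (_ * laplace _ _ _).
  by apply/funext => y; rewrite expr0 mulr1.
have := is_derive_mulf (is_derive_invf (lt0r_neq0 M0t) (is_derive_M 0 It))
  (is_derive_moment I_open 0 psiI It).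
by move/is_derive_eq; apply; field; rewrite gt_eqF.
Qed.

Lemma is_derive_slope t : I t ->
  is_derive t 1 slope (moment nu (residual t) 2 t * M 0 t / gram t).
Proof.
move=> It; have gt := gram_gt0 It.
have dP n := is_derive_moment I_open n psiI It; have dM n := is_derive_M n It.
have dC :=
  is_derive_subf (is_derive_mulf (dM 0%N) (dP 1%N)) (is_derive_mulf (dM 1%N) (dP 0%N)).
have dgram :=
  is_derive_subf (is_derive_mulf (dM 0%N) (dM 2%N)) (is_derive_mulf (dM 1%N) (dM 1%N)).
have := is_derive_mulf dC (is_derive_invf (lt0r_neq0 gt) dgram).
move/is_derive_eq; apply; rewrite moment_residual // /intercept /slope.
by move: gt; rewrite /gram expr2 => gt; field; rewrite gt_eqF.
Qed.

Lemma is_derive_PsiF r : Jset nu I r ->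
  is_derive r 1 (PsiF nu I psi) (slope (theta_of nu I r)).
Proof.
move=> /Jset_theta_of[It rho_t]; set t := theta_of nu I r in It rho_t *.
have dtheta := is_derive_theta_of It; rewrite rho_t in dtheta.
have := is_derive1_comp (is_derive_tilt_psi It) dtheta.
move/is_derive_eq; apply; rewrite /slope.
by have := M0_gt0 It; have := gram_gt0 It => ? ?; field; rewrite !gt_eqF.
Qed.

Lemma is_derive_derive1_PsiF r : Jset nu I r ->
  is_derive r 1 (derive1 (PsiF nu I psi)) (moment nu (residual (theta_of nu I r)) 2
    (theta_of nu I r) * (M 0 (theta_of nu I r) ^+ 3 / gram (theta_of nu I r) ^+ 2)).
Proof.
move=> Jr; have [It rho_t] := Jset_theta_of Jr; set t := theta_of nu I r in It rho_t *.
have PsiF'E : \forall r' \near r, (slope \o theta_of nu I) r' = derive1 (PsiF nu I psi) r'.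
  apply: filterS (Jset_nbhs Jr) => r' Jr'.
  by rewrite derive1E; case: (is_derive_PsiF Jr') => _ ->.
apply: near_eq_is_derive PsiF'E _.
have dtheta := is_derive_theta_of It; rewrite rho_t in dtheta.
have := is_derive1_comp (is_derive_slope It) dtheta.
move/is_derive_eq; apply.
by have := M0_gt0 It; have := gram_gt0 It => ? ?; field; rewrite !gt_eqF.
Qed.

End exponential_tilting.

Section convex_tilted_integral.
Context {R : realType} (nu : probability R R) (I : set R).
Hypothesis I_open : forall t, I t -> exists2 d, 0 < d & forall s, `|s - t| <= d -> I s.
Hypothesis I_itv : is_interval I.
Hypothesis oneI : laplace_integrable nu I (fun _ => 1).
Hypothesis nondeg : forall c : R, nu [set c] != 1%E.
Variable psi : R -> R.
Hypothesis psiI : laplace_integrable nu I psi.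
Hypothesis psi_convex : forall x y t, 0 <= t <= 1 ->
  psi (t * x + (1 - t) * y) <= t * psi x + (1 - t) * psi y.

Local Notation J := (Jset nu I).
Local Notation Psi := (PsiF nu I psi).
Local Notation residual := (residual nu psi).

Lemma moment2_residual_ge0 t : I t ->
  0 <= moment nu (residual t) 2 t /\
  (moment nu (residual t) 2 t = 0 ->
     {ae nu, forall y, psi y = slope nu psi t * y + intercept nu psi t}).
Proof.
move=> It; have [res0 res1] := moment_residual_orth I_open oneI nondeg psiI It.
have resI : laplace_integrable nu I (residual t).
  apply: laplace_integrable_ext (laplace_integrableD (laplace_integrableD psiI
    (laplace_integrableZ (- intercept nu psi t) oneI))
    (laplace_integrableZ (- slope nu psi t) (laplace_integrableMx I_open oneI))) => y.
  by rewrite /residual; ring.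
have res_convex x y s : 0 <= s <= 1 ->
    residual t (s * x + (1 - s) * y) <= s * residual t x + (1 - s) * residual t y.
  move=> s01; have := psi_convex x y s01; rewrite /residual; lra.
have [ge0 eq0] := moment2_convex_ge0 I_open It resI res_convex res0 res1.
split => // /eq0; apply: filterS => y; rewrite /residual => res_y0.
by rewrite -[psi y]subr0 -res_y0; ring.
Qed.

Lemma PsiF_derive2 r : J r ->
  [/\ derivable Psi r 1, derivable (derive1 Psi) r 1 &
      derive1 (derive1 Psi) r = moment nu (residual (theta_of nu I r)) 2 (theta_of nu I r) *
        (moment nu (fun _ => 1) 0 (theta_of nu I r) ^+ 3 / gram nu (theta_of nu I r) ^+ 2)].
Proof.
move=> Jr; split; first by case: (is_derive_PsiF I_open I_itv oneI nondeg psiI Jr).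
- by case: (is_derive_derive1_PsiF I_open I_itv oneI nondeg psiI Jr).
- by rewrite derive1E; case: (is_derive_derive1_PsiF I_open I_itv oneI nondeg psiI Jr).
Qed.

Lemma PsiF_convex :
  convex_on J Psi /\
  (~ (exists c d : R, {ae nu, forall x, psi x = c * x + d}) ->
     (forall r, J r -> derivable Psi r 1 /\ derivable (derive1 Psi) r 1 /\
                       0 < derive1n 2 Psi r) /\
     strictly_convex_on J Psi).
Proof.
have iJ := is_interval_Jset I_open I_itv oneI nondeg.
have theta_I r : J r -> I (theta_of nu I r).
  by case/(Jset_theta_of I_open I_itv oneI nondeg).
have factor_gt0 r : J r -> 0 < moment nu (fun _ => 1) 0 (theta_of nu I r) ^+ 3 /
                                   gram nu (theta_of nu I r) ^+ 2.
  move/theta_I => It.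
  by rewrite divr_gt0 ?exprn_gt0 ?(M0_gt0 I_open oneI It) ?(gram_gt0 I_open oneI nondeg It).
split.
  apply: convex_on_derive2_ge0 iJ _ => r Jr; have [dPsi dPsi' ->] := PsiF_derive2 Jr.
  do 2 split => //; apply: mulr_ge0; last exact/ltW/factor_gt0.
  exact: (moment2_residual_ge0 (theta_I r Jr)).1.
move=> not_affine.
have Psi''_gt0 r : J r -> derivable Psi r 1 /\ derivable (derive1 Psi) r 1 /\
    0 < derive1 (derive1 Psi) r.
  move=> Jr; have [dPsi dPsi' ->] := PsiF_derive2 Jr.
  have [K_ge0 K_affine] := moment2_residual_ge0 (theta_I r Jr).
  do 2 split => //; apply: mulr_gt0; last exact: factor_gt0.
  rewrite lt_def K_ge0 andbT.
  by apply/eqP => /K_affine psi_affine; apply: not_affine; do 2 eexists; exact: psi_affine.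
split; first exact: Psi''_gt0.
exact: strictly_convex_on_derive2_gt0 iJ Psi''_gt0.
Qed.

End convex_tilted_integral.

Section extended_interval.
Context {R : realType}.
Implicit Types (a b : \bar R) (t : R).

Lemma lte_fin_shiftl a t : (a < t%:E)%E -> exists2 d, 0 < d & (a < (t - d)%:E)%E.
Proof.
case: a => [r||] //=; last by exists 1; rewrite ?ltNyr.
by rewrite lte_fin => rt; exists ((t - r) / 2); rewrite ?lte_fin; lra.
Qed.

Lemma lte_fin_shiftr b t : (t%:E < b)%E -> exists2 d, 0 < d & ((t + d)%:E < b)%E.
Proof.
case: b => [r||] //=; last by exists 1; rewrite ?ltry.
by rewrite lte_fin => tr; exists ((r - t) / 2); rewrite ?lte_fin; lra.
Qed.

Lemma eitv_ball a b t : eitv a b t ->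
  exists2 d, 0 < d & forall s, `|s - t| <= d -> eitv a b s.
Proof.
move=> /andP[/lte_fin_shiftl[da da0 at_d] /lte_fin_shiftr[db db0 tb_d]].
exists (Num.min da db) => [|s]; first by rewrite lt_min da0 db0.
have m_da : Num.min da db <= da by rewrite ge_min lexx.
have m_db : Num.min da db <= db by rewrite ge_min lexx orbT.
rewrite ler_norml /eitv /= => /andP[sl sr]; apply/andP; split.
- by apply: (lt_le_trans at_d); rewrite lee_fin; lra.
- by apply: (le_lt_trans _ tb_d); rewrite lee_fin; lra.
Qed.

Lemma is_interval_eitv a b : is_interval (eitv a b).
Proof.
move=> x y /andP[ax _] /andP[_ yb] z /andP[xz zy]; apply/andP; split.
- by rewrite (lt_le_trans ax) ?lee_fin.
- by rewrite (le_lt_trans _ yb) ?lee_fin.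
Qed.

End extended_interval.

Theorem theoremA1 (R : realType) (nu : probability R R) (a b : \bar R)
  (psi : R -> R) :
  (forall c : R, nu [set c] != 1%E) ->
  (a < b)%E ->
  (forall theta, eitv a b theta ->
     (\int[nu]_x (expR (theta * x))%:E < +oo)%E) ->
  measurable_fun setT psi ->
  (forall theta, eitv a b theta ->
     (\int[nu]_x (`|psi x| * expR (theta * x))%:E < +oo)%E) ->
  let J := Jset nu (eitv a b) in
  let Psi := PsiF nu (eitv a b) psi in
  (forall x y t, 0 <= t <= 1 ->
     psi (t * x + (1 - t) * y) <= t * psi x + (1 - t) * psi y) ->
  convex_on J Psi /\
  (~ (exists c d : R, {ae nu, forall x, psi x = c * x + d}) ->
     (forall r, J r -> derivable Psi r 1 /\ derivable (derive1 Psi) r 1 /\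
                       0 < derive1n 2 Psi r) /\
     strictly_convex_on J Psi).
Proof.
(* a < b only rules out an empty J; the argument does not need it. *)
move=> nondeg _ mgf_fin psi_meas psi_fin J Psi psi_convex.
have integrable_of_fin (g : R -> R) : measurable_fun setT g ->
    (forall t, eitv a b t -> (\int[nu]_x (`|g x| * expR (t * x))%:E < +oo)%E) ->
    laplace_integrable nu (eitv a b) g.
  move=> mg g_fin; split => // t It; apply/integrableP; split.
    by apply/measurable_EFinP/measurable_funM => //; exact: measurable_expR_mul.
  under eq_integral do rewrite /= normrM (ger0_norm (expR_ge0 _)).
  exact: g_fin.
have oneI : laplace_integrable nu (eitv a b) (fun _ => 1).
  apply: integrable_of_fin => // t It.
  under eq_integral do rewrite normr1 mul1r.
  exact: mgf_fin.
exact: (PsiF_convex (@eitv_ball R a b) (@is_interval_eitv R a b) oneI nondeg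
  (integrable_of_fin _ psi_meas psi_fin) psi_convex).
Qed.
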